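(* Let $X$ be a metric space, let $A\subseteq X$ be nonempty and let $Y$ be a hyperconvex metric space. Let $\Phi_c:\mathcal{N}(A,Y)\to\mathcal{P}(\mathcal{N}(X,Y))$ assign to each $f$ the set of all $f'\in\mathcal{N}(X,Y)$ with $f'|_A=f$ and $f'(X)\subseteq\mathrm{cov}(f(A))$. Then $\Phi_c$ is a nonexpansive multivalued mapping, i.e. $\Phi_c(f)\neq\emptyset$ and $H(\Phi_c(f),\Phi_c(g))\le d_\infty(f,g)$ for all $f,g\in\mathcal{N}(A,Y)$.
   Context: A metric space $Y$ is hyperconvex if $\bigcap_\alpha B(x_\alpha,r_\alpha)\ne\emptyset$ for every family of points $x_\alpha\in Y$ and $r_\alpha>0$ with $d(x_\alpha,x_\beta)\le r_\alpha+r_\beta$ ($B$ = closed ball). For a nonempty bounded $D\subseteq Y$, the admissible hull $\mathrm{cov}(D)$ is the intersection of all closed balls containing $D$, equivalently $\bigcap_{y\in Y}B(y,r_y(D))$ with $r_y(D)=\sup_{a\in D}d(y,a)$. $\mathcal{N}(A,Y)$ is the set of bounded nonexpansive maps $A\to Y$ with the supremum metric $d_\infty$; $H$ is the Pompeiu–Hausdorff distance in $(\mathcal{N}(X,Y),d_\infty)$. *)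

From HB Require Import structures.
From mathcomp Require Import all_boot all_order all_algebra.
From mathcomp Require Import all_classical all_reals ereal.
Set Implicit Arguments. Unset Strict Implicit. Unset Printing Implicit Defensive.
Import Order.TTheory GRing.Theory Num.Theory.
Local Open Scope classical_set_scope.
Local Open Scope ring_scope.

Record metricSpace (R : realType) := MetricSpace {
  msT :> Type;
  mdist : msT -> msT -> R;
  mdist_self : forall x, mdist x x = 0;
  mdist_eq0 : forall x y, mdist x y = 0 -> x = y;
  mdist_sym : forall x y, mdist x y = mdist y x;
  mdist_triangle : forall x y z, mdist x z <= mdist x y + mdist y z }.
Arguments mdist {R} m.

Section Defs.
Variable R : realType.

Definition cball (Y : metricSpace R) (c : Y) (r : R) : set Y :=
  [set y | mdist Y c y <= r].

Definition hyperconvex (Y : metricSpace R) : Prop :=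
  forall (I : Type) (x : I -> Y) (r : I -> R),
    (forall i, 0 < r i) ->
    (forall i j, mdist Y (x i) (x j) <= r i + r j) ->
    exists y : Y, forall i, y \in cball (x i) (r i).

Definition cov (Y : metricSpace R) (D : set Y) : set Y :=
  [set y | forall (c : Y) (r : R), D `<=` cball c r -> cball c r y].

Definition subdist (X : metricSpace R) (A : set X) (a b : {x : X | A x}) : R :=
  mdist X (proj1_sig a) (proj1_sig b).

Definition bounded_fun (T : Type) (Y : metricSpace R) (f : T -> Y) : Prop :=
  exists (y0 : Y) (M : R), forall t, mdist Y y0 (f t) <= M.

Definition nonexpansive (T : Type) (dT : T -> T -> R) (Y : metricSpace R)
  (f : T -> Y) : Prop := forall s t, mdist Y (f s) (f t) <= dT s t.

Definition NE (T : Type) (dT : T -> T -> R) (Y : metricSpace R) : set (T -> Y) :=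
  [set f | bounded_fun f /\ nonexpansive dT f].

Definition dinf (T : Type) (Y : metricSpace R) (f g : T -> Y) : \bar R :=
  ereal_sup (range (fun t => (mdist Y (f t) (g t))%:E)).

Definition hausdorff (U : Type) (d : U -> U -> \bar R) (S T : set U) : \bar R :=
  maxe (ereal_sup [set ereal_inf [set d s t | t in T] | s in S])
       (ereal_sup [set ereal_inf [set d s t | s in S] | t in T]).

Definition Phi_c (X Y : metricSpace R) (A : set X) (f : {x : X | A x} -> Y)
  : set (X -> Y) :=
  [set f' | NE (mdist X) f'
            /\ (forall a : {x : X | A x}, f' (proj1_sig a) = f a)
            /\ (forall x : X, cov (range f) (f' x))].

End Defs.

(* A hyperconvex target lets one extend a nonexpansive map from a subset even
   under ball constraints at every point, as long as the constraints at a point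
   pairwise intersect and vary 1-Lipschitz in the point: a maximal admissible
   partial extension (Zorn) absorbs any further point, because the balls around
   its graph together with the constraint balls there have a common point.
   Constraining to the balls containing f(A) yields an element of Phi_c(f);
   adding the constraint B(f'(x), e) with e = d_inf(f, g) moves any f' in
   Phi_c(f) to some g' in Phi_c(g) with d_inf(f', g') <= e, which bounds both
   halves of the Hausdorff distance. *)

From Pilot Require Import Defs.
From HB Require Import structures.
From mathcomp Require Import all_boot all_order all_algebra.
From mathcomp Require Import all_classical all_reals ereal.
From mathcomp Require Import lra.
Set Implicit Arguments. Unset Strict Implicit. Unset Printing Implicit Defensive.
Import Defs.
Import Order.TTheory GRing.Theory Num.Theory.
Local Open Scope classical_set_scope.
Local Open Scope ring_scope.

Lemma le_of_forall_gt (R : realType) (x y : R) : (forall z, y < z -> x <= z) -> x <= y.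
Proof. by move=> xz; apply/ler_addgt0Pr => e e_gt0; apply: xz; rewrite ltrDl. Qed.

Lemma mdist_ge0 {R : realType} {X : metricSpace R} (x y : X) : 0 <= mdist X x y.
Proof. by have := mdist_triangle x y x; rewrite mdist_self (mdist_sym y x); lra. Qed.

Section ConstrainedExtension.
Variables (R : realType) (X Y : metricSpace R).
Hypothesis hY : hyperconvex Y.

Variable K : X -> set (Y * R).
Hypothesis K_gt0 : forall x k, K x k -> 0 < k.2.
Hypothesis K_compat : forall x k l, K x k -> K x l -> mdist Y k.1 l.1 <= k.2 + l.2.

Definition in_balls (x : X) (y : Y) := forall k, K x k -> mdist Y k.1 y <= k.2.

Hypothesis K_lipschitz : forall x z y k,
  in_balls z y -> K x k -> mdist Y y k.1 <= mdist X x z + k.2.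

Definition admissible (G : set (X * Y)) :=
  (forall p q, G p -> G q -> mdist Y p.2 q.2 <= mdist X p.1 q.1) /\
  (forall p, G p -> in_balls p.1 p.2).

Lemma admissibleU_bigcup (G0 : set (X * Y)) (F : set (set (X * Y))) :
  admissible G0 -> (forall G, F G -> admissible (G `|` G0)) ->
  total_on F subset -> admissible (\bigcup_(G in F) G `|` G0).
Proof.
move=> adG0 adF Ftot; split; last first.
  by move=> p [[G FG Gp]|G0p]; [apply: (adF G FG).2; left | exact: adG0.2].
move=> p q [[S FS Sp]|G0p] [[T FT Tq]|G0q].
- have [ST|TS] := Ftot S T FS FT.
    by apply: (adF T FT).1; left; [exact: ST|].
  by apply: (adF S FS).1; left; [|exact: TS].
- by apply: (adF S FS).1; [left|right].
- by apply: (adF T FT).1; [right|left].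
- exact: adG0.1.
Qed.

(* Hyperconvexity applied to the balls around the graph points of G, of radius
   the distance to x, together with the constraint balls at x. *)
Lemma admissible_add_point (G : set (X * Y)) (x : X) :
  admissible G -> (forall p, G p -> p.1 <> x) ->
  exists y, admissible (G `|` [set (x, y)]).
Proof.
move=> [Gne Gin] xG.
pose I := ({p | G p} + {k | K x k})%type.
pose c (i : I) := match i with inl p => (sval p).2 | inr k => (sval k).1 end.
pose r (i : I) := match i with inl p => mdist X x (sval p).1 | inr k => (sval k).2 end.
have [y yP] : exists y, forall i, y \in cball (c i) (r i).
  apply: hY.
- case=> [[p Gp]|[k Kk]] /=; last exact: K_gt0 Kk.
  rewrite lt_neqAle mdist_ge0 andbT; apply/eqP => /esym /mdist_eq0 xp.
  exact: xG Gp (esym xp).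
- case=> [[p Gp]|[k Kk]] [[q Gq]|[l Kl]] /=.
  + by apply: le_trans (Gne _ _ Gp Gq) _; rewrite (mdist_sym x); apply: mdist_triangle.
  + exact: K_lipschitz (Gin _ Gp) Kl.
  + by rewrite mdist_sym addrC; apply: K_lipschitz (Gin _ Gq) Kk.
  + exact: K_compat Kk Kl.
have yG p : G p -> mdist Y p.2 y <= mdist X p.1 x.
  by move=> Gp; rewrite (mdist_sym p.1); exact: set_mem (yP (inl (exist _ p Gp))).
exists y; split; last first.
  move=> p [Gp|->]; first exact: Gin.
  by move=> k Kk; exact: set_mem (yP (inr (exist _ k Kk))).
move=> p q [Gp|->] [Gq|->] /=.
- exact: Gne.
- exact: yG.
- by rewrite mdist_sym (mdist_sym x); exact: yG.
- by rewrite !mdist_self.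
Qed.

Lemma admissible_extension (G0 : set (X * Y)) : admissible G0 ->
  exists g : X -> Y, (forall p, G0 p -> g p.1 = p.2) /\
    nonexpansive (mdist X) g /\ forall x, in_balls x (g x).
Proof.
move=> adG0.
have [|M [adM Mmax]] := Zorn_bigcup (P := fun G => admissible (G `|` G0)).
  by move=> F; exact: admissibleU_bigcup.
have total x : exists y, (M `|` G0) (x, y).
  apply: contrapT => noy.
  have [|y ady] := admissible_add_point (x := x) adM.
    by move=> [x' y'] Gp /= x'x; apply: noy; exists y'; rewrite -x'x.
  apply: (Mmax (M `|` [set (x, y)])); last by rewrite setUAC.
  split=> [p Mp|]; first by left.
  by move=> /(_ (x, y) (or_intror erefl)) Mxy; apply: noy; exists y; left.
pose g x := projT1 (cid (total x)).
have gM x : (M `|` G0) (x, g x) := projT2 (cid (total x)).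
exists g; split; [|split].
- move=> p G0p; apply: mdist_eq0; apply/eqP; rewrite eq_le mdist_ge0 andbT.
  by have := adM.1 _ _ (gM p.1) (or_intror G0p); rewrite mdist_self.
- by move=> x x'; exact: adM.1 (gM x) (gM x').
- by move=> x; exact: adM.2 (gM x).
Qed.

Lemma nonexpansive_extension (A : set X) (g : {x | A x} -> Y) :
  nonexpansive (@subdist R X A) g -> (forall a, in_balls (sval a) (g a)) ->
  exists G : X -> Y, (forall a, G (sval a) = g a) /\
    nonexpansive (mdist X) G /\ forall x, in_balls x (G x).
Proof.
move=> gne gin.
have [|G [Gg GP]] := admissible_extension (G0 := range (fun a => (sval a, g a))).
  by split=> [_ _ [a _ <-] [b _ <-]|_ [a _ <-]]; [exact: gne | exact: gin].
by exists G; split=> // a; exact: (Gg (sval a, g a) (imageT _ a)).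
Qed.

End ConstrainedExtension.

Section AdmissibleHull.
Variables (R : realType) (Y : metricSpace R).

(* The balls strictly larger than some ball containing D: hyperconvexity only
   handles positive radii, and cov D is recovered from them in the limit. *)
Definition hull_balls (D : set Y) : set (Y * R) :=
  [set k | exists2 r, D `<=` cball k.1 r & r < k.2].

Variable D : set Y.
Hypothesis D_neq0 : D !=set0.

Lemma hull_balls_gt0 k : hull_balls D k -> 0 < k.2.
Proof.
move=> [r Dr rk]; have [d Dd] := D_neq0.
by have := Dr d Dd; have := mdist_ge0 k.1 d; rewrite /cball /=; lra.
Qed.

Lemma hull_balls_compat k l : hull_balls D k -> hull_balls D l ->
  mdist Y k.1 l.1 <= k.2 + l.2.
Proof.
move=> [r Dr rk] [s Ds sl]; have [d Dd] := D_neq0.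
have := Dr d Dd; have := Ds d Dd; rewrite /cball /= => ls kr.
have := mdist_triangle k.1 d l.1; rewrite (mdist_sym d); lra.
Qed.

Lemma cov_hull_balls y : (forall k, hull_balls D k -> mdist Y k.1 y <= k.2) -> cov D y.
Proof.
move=> yD c r Dc; apply: le_of_forall_gt => s rs.
by apply: (yD (c, s)); exists r.
Qed.

End AdmissibleHull.

Lemma bounded_cov (R : realType) (T : Type) (Y : metricSpace R) (f : T -> Y)
  (T' : Type) (G : T' -> Y) :
  bounded_fun f -> (forall x, cov (range f) (G x)) -> bounded_fun G.
Proof.
by move=> [y0 [M fM]] Gcov; exists y0, M => x; apply: Gcov => _ [t _ <-]; exact: fM.
Qed.

Lemma Phi_c_near (R : realType) (X Y : metricSpace R) (A : set X) (hA : A !=set0)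
  (hY : hyperconvex Y) (g : {x | A x} -> Y) (h : X -> Y) (e : R) :
  NE (@subdist R X A) g -> nonexpansive (mdist X) h ->
  (forall a, mdist Y (h (sval a)) (g a) <= e) ->
  (forall x c r, range g `<=` cball c r -> cball c (r + e) (h x)) ->
  exists2 G, Phi_c g G & forall x, mdist Y (h x) (G x) <= e.
Proof.
move=> [gb gne] hne hg hcov; have [x0 Ax0] := hA.
have g_neq0 : range g !=set0 by exists (g (exist _ x0 Ax0)), (exist _ x0 Ax0).
have e_ge0 : 0 <= e := le_trans (mdist_ge0 _ _) (hg (exist _ x0 Ax0)).
pose K x := hull_balls (range g) `|` [set k | k.1 = h x /\ e < k.2].
have K_gt0 x k : K x k -> 0 < k.2.
  by case=> [/(hull_balls_gt0 g_neq0) //|[_ ek]]; exact: le_lt_trans e_ge0 ek.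
have near_h x y : in_balls K x y -> mdist Y (h x) y <= e.
  by move=> xy; apply: le_of_forall_gt => s es; apply: (xy (h x, s)); right.
have [||||G [Gg [Gne GK]]] := nonexpansive_extension (K := K) hY _ _ _ gne.
- exact: K_gt0.
- move=> x k l [Hk|[-> ek]] [Hl|[-> el]]; first exact: (hull_balls_compat g_neq0).
  + case: Hk => r gr rk; have := hcov x _ _ gr.
    by rewrite /cball /=; lra.
  + case: Hl => s gs sl; rewrite mdist_sym; have := hcov x _ _ gs.
    by rewrite /cball /=; lra.
  + by rewrite mdist_self; lra.
- move=> x z y k zy [Hk|[-> ek]].
  + rewrite mdist_sym; have := zy k (or_introl Hk); have := mdist_ge0 x z; lra.
  + have hzy : mdist Y y (h z) <= e by rewrite mdist_sym; exact: near_h.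
    have hzx : mdist Y (h z) (h x) <= mdist X x z.
      by rewrite mdist_sym; exact: hne.
    by have := mdist_triangle y (h z) (h x); lra.
- move=> a k [[r gr rk]|[-> ek]].
    by apply: ltW; apply: le_lt_trans rk; exact: gr (imageT _ _).
  by apply: ltW; exact: le_lt_trans (hg a) ek.
exists G; last by move=> x; exact: near_h (GK x).
have Gcov x : cov (range g) (G x).
  by apply: cov_hull_balls => // k Hk; apply: GK; left.
by split; [split; [exact: bounded_cov Gcov|] | split].
Qed.

Lemma Phi_c_neq0 (R : realType) (X Y : metricSpace R) (A : set X) (hA : A !=set0)
  (hY : hyperconvex Y) (f : {x | A x} -> Y) :
  NE (@subdist R X A) f -> Phi_c f !=set0.
Proof.
move=> fNE; have [[y0 [M fM]] _] := fNE; have [x0 Ax0] := hA.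
pose a0 : {x | A x} := exist _ x0 Ax0.
have fM0 a : mdist Y (f a0) (f a) <= M + M.
  have := mdist_triangle (f a0) y0 (f a); rewrite (mdist_sym (f a0) y0).
  by have := fM a0; have := fM a; lra.
have M_ge0 : 0 <= M := le_trans (mdist_ge0 _ _) (fM a0).
have [|||G fG _] := Phi_c_near hA hY (h := fun=> f a0) (e := M + M) fNE.
- by move=> x x'; rewrite mdist_self mdist_ge0.
- exact: fM0.
- by move=> x c r fr; have := fr _ (imageT f a0); rewrite /cball /=; lra.
by exists G.
Qed.

Lemma dinfC (R : realType) (T : Type) (Y : metricSpace R) (u v : T -> Y) :
  dinf u v = dinf v u.
Proof.
rewrite /dinf; have -> // : (fun t => (mdist Y (u t) (v t))%:E) =
  (fun t => (mdist Y (v t) (u t))%:E).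
by apply/funext => t; rewrite mdist_sym.
Qed.

Lemma dinf_Phi_c_le (R : realType) (X Y : metricSpace R) (A : set X) (hA : A !=set0)
  (hY : hyperconvex Y) (f g : {x | A x} -> Y) (f' : X -> Y) :
  NE (@subdist R X A) g -> Phi_c f f' ->
  (ereal_inf [set dinf f' t | t in Phi_c g] <= dinf f g)%E.
Proof.
move=> gNE [[_ f'ne] [f'f f'cov]]; have [x0 Ax0] := hA.
have fg_le a : ((mdist Y (f a) (g a))%:E <= dinf f g)%E.
  by apply: ereal_sup_ubound; exists a.
case dfg: (dinf f g) => [e| |]; last 2 first.
- exact: leey.
- by have := fg_le (exist _ x0 Ax0); rewrite dfg leeNy_eq.
have fge a : mdist Y (f a) (g a) <= e by have := fg_le a; rewrite dfg lee_fin.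
have [a|x c r gr|G Gg Ge] := Phi_c_near hA hY (h := f') (e := e) gNE f'ne.
- by rewrite f'f; exact: fge.
- apply: f'cov => _ [a _ <-]; apply: le_trans (mdist_triangle c (g a) (f a)) _.
  by rewrite (mdist_sym (g a)); apply: lerD; [exact: gr (imageT g a) | exact: fge].
apply: ge_ereal_inf; exists (dinf f' G); first by exists G.
by apply: ge_ereal_sup => _ [x _ <-]; rewrite lee_fin.
Qed.

Theorem lemma5p11 (R : realType) (X Y : metricSpace R) (A : set X)
  (hA : A !=set0) (hY : hyperconvex Y) :
  forall f g : {x : X | A x} -> Y,
    NE (@subdist R X A) f -> NE (@subdist R X A) g ->
    Phi_c f !=set0 /\
    (hausdorff (@dinf R X Y) (Phi_c f) (Phi_c g) <= dinf f g)%E.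
Proof.
move=> f g fNE gNE; split; first exact: Phi_c_neq0.
rewrite /hausdorff ge_max; apply/andP; split.
  by apply: ge_ereal_sup => _ [f' f'P <-]; exact: dinf_Phi_c_le.
apply: ge_ereal_sup => _ [g' g'P <-]; rewrite dinfC.
have -> : [set dinf s g' | s in Phi_c f] = [set dinf g' s | s in Phi_c f].
  by apply/seteqP; split => _ [s sP <-]; exists s => //; exact: dinfC.
exact: dinf_Phi_c_le.
Qed.
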